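(* Let $h$ be a Hessenberg function on $\{1,\dots,n\}$ with degree tuple $(\beta_n,\dots,\beta_1)$, and let $R=\mathbb{Z}[x_1,\dots,x_n]$. Then $R/J_h$ is a free $\mathbb{Z}$-module with basis (the images of) the monomials $$\mathcal{B}_h=\{x_1^{\alpha_1}x_2^{\alpha_2}\cdots x_n^{\alpha_n} : 0\le\alpha_i\le\beta_i-1,\ i=1,\dots,n\}.$$
   Context: A Hessenberg function is a map $h:\{1,\dots,n\}\to\{1,\dots,n\}$, $h_i:=h(i)$, with $i\le h_i\le n$ for all $i$ and $h_i\le h_{i+1}$ for $1\le i\le n-1$. Its degree tuple is $(\beta_n,\beta_{n-1},\dots,\beta_1)$ with $\beta_i=i-\#\{k: h_k<i\}$. For a set $S$ of variables, $\tilde e_r(S)$ denotes the complete homogeneous symmetric polynomial of degree $r$ in $S$ (sum of all degree-$r$ monomials in $S$, e.g. $\tilde e_2(x_3,x_4)=x_3^2+x_3x_4+x_4^2$). The ideal is $J_h=\langle \tilde e_{\beta_n}(x_n),\tilde e_{\beta_{n-1}}(x_{n-1},x_n),\dots,\tilde e_{\beta_1}(x_1,\dots,x_n)\rangle\subseteq R$, i.e. the $i$-th generator is $\tilde e_{\beta_i}(x_i,x_{i+1},\dots,x_n)$. *)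

From HB Require Import structures.
From mathcomp Require Import all_boot all_order all_algebra.
Unset Printing Implicit Defensive.
Import Order.TTheory GRing.Theory Num.Theory.
Local Open Scope ring_scope.

Fixpoint mpoly (n : nat) : comNzRingType :=
  if n is n'.+1 then ({poly (mpoly n')} : comNzRingType) else (int : comNzRingType).

(* mvar n j = x_{j+1} (0-based index j < n); x_n is the outermost 'X. *)
Fixpoint mvar (n : nat) (j : nat) {struct n} : mpoly n :=
  match n return mpoly n with
  | 0 => 0
  | n'.+1 => if j == n' then ('X : {poly mpoly n'}) else ((mvar n' j)%:P : {poly mpoly n'})
  end.

Definition X (n i : nat) : mpoly n := mvar n i.-1.

(* Complete homogeneous symmetric polynomial of degree r in the variables s:
   sum of all degree-r monomials, computed by splitting off the exponent of
   the first variable. *)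
Fixpoint hcomp {R : comNzRingType} (r : nat) (s : seq R) : R :=
  match s with
  | [::] => (r == 0%N)%:R
  | x :: s' => \sum_(k < r.+1) x ^+ k * hcomp (r - k) s'
  end.

Definition hessenberg (n : nat) (h : nat -> nat) : Prop :=
  (forall i, (1 <= i <= n)%N -> (i <= h i <= n)%N) /\
  (forall i, (1 <= i < n)%N -> (h i <= h i.+1)%N).

Definition beta (n : nat) (h : nat -> nat) (i : nat) : nat :=
  (i - count (fun k => h k < i) (iota 1 n))%N.

Definition Jgen (n : nat) (h : nat -> nat) (i : nat) : mpoly n :=
  hcomp (beta n h i) [seq X n j | j <- iota i (n - i).+1].

Definition inJ (n : nat) (h : nat -> nat) (f : mpoly n) : Prop :=
  exists g : nat -> mpoly n, f = \sum_(1 <= i < n.+1) g i * Jgen n h i.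

(* Exponent vectors a, with a i = alpha_{i+1}; exponents alpha_i <= beta_i - 1
   <= n - 1 always fit in 'I_n since beta_i <= i <= n. *)
Definition inB (n : nat) (h : nat -> nat) (a : {ffun 'I_n -> 'I_n}) : bool :=
  [forall i : 'I_n, (a i < beta n h i.+1)%N].

Definition mono (n : nat) (a : {ffun 'I_n -> 'I_n}) : mpoly n :=
  \prod_(i < n) X n i.+1 ^+ a i.

Definition combB (n : nat) (h : nat -> nat) (c : {ffun 'I_n -> 'I_n} -> int)
  : mpoly n :=
  \sum_(a : {ffun 'I_n -> 'I_n} | inB n h a) (c a)%:~R * mono n a.

From mathcomp Require Import all_boot all_algebra zify.
Import GRing.Theory.
Import Pdiv.Ring Pdiv.RingMonic.
Local Open Scope ring_scope.

(* Rename the variables so that x_i becomes y_{n+1-i}.  Then J_i becomes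
   h_{beta_i}(y_1, ..., y_{n+1-i}), and viewing Z[y_1, ..., y_m] as
   Z[y_1, ..., y_{m-1}][y_m], the generator involving y_m is monic in y_m of
   degree beta_{n+1-m} while all earlier generators are constants.  By
   induction on m, division by that monic generator brings every polynomial
   to a reduced one (y_m-degree below the bound, reduced coefficients), and a
   reduced polynomial of the ideal has its coefficients in the ideal one level
   down, hence vanishes.  Reduced polynomials are exactly the Z-combinations of
   the renamed monomials of B_h. *)

Lemma hcomp0 (R : comNzRingType) (s : seq R) : hcomp 0 s = 1.
Proof. by elim: s => [|x s IH] //=; rewrite big_ord1 expr0 mul1r IH. Qed.

Lemma rmorph_hcomp {R S : comNzRingType} (f : {rmorphism R -> S}) r (s : seq R) :
  f (hcomp r s) = hcomp r (map f s).
Proof.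
elim: s r => [|x s IH] r /=; first by rewrite rmorph_nat.
by rewrite rmorph_sum; apply: eq_bigr => k _; rewrite rmorphM rmorphXn IH.
Qed.

Lemma mvarS N j : (j < N)%N -> mvar N.+1 j = (mvar N j)%:P.
Proof. by move=> ltjN /=; rewrite (ltn_eqF ltjN). Qed.

Lemma mvarSn N : mvar N.+1 N = 'X.
Proof. by rewrite /= eqxx. Qed.

Section Evaluation.
Context {S : comNzRingType} (v : nat -> S).

Fixpoint mpoly_eval (N : nat) : {rmorphism mpoly N -> S} :=
  match N return {rmorphism mpoly N -> S} with
  | 0 => (intr : {rmorphism int -> S})
  | N'.+1 => horner_morph (fun x => mulrC (v N') (mpoly_eval N' x))
  end.

Lemma mpoly_eval_var N j : (j < N)%N -> mpoly_eval N (mvar N j) = v j.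
Proof.
elim: N => [//|N IH] ltjN /=.
have [->|neq_jN] := eqVneq j N; first by rewrite horner_morphX.
by rewrite horner_morphC IH // -ltnS ltn_neqAle neq_jN.
Qed.

End Evaluation.

Lemma mpoly_rmorph_eq {S : comNzRingType} N (f g : {rmorphism mpoly N -> S}) :
  (forall j, (j < N)%N -> f (mvar N j) = g (mvar N j)) -> f =1 g.
Proof.
elim: N f g => [|N IH] f g fg_var p; first by rewrite -[p]intz !rmorph_int.
have fgC : (f \o polyC) =1 (g \o polyC).
  apply: (IH (f \o polyC) (g \o polyC)) => j ltjN /=.
  by rewrite -mvarS // fg_var // ltnW.
have fgX : f 'X = g 'X by rewrite -mvarSn fg_var.
rewrite -[p : {poly _}]coefK poly_def !rmorph_sum; apply: eq_bigr => i _.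
by rewrite -mul_polyC !rmorphM !rmorphXn fgX; congr (_ * _); exact: fgC.
Qed.

Section IdealMembership.
Context {R : comNzRingType}.

Definition in_ideal (N : nat) (G : nat -> R) (f : R) : Prop :=
  exists g : nat -> R, f = \sum_(1 <= m < N.+1) g m * G m.

Context {N : nat} {G : nat -> R}.

Lemma in_ideal0 : in_ideal N G 0.
Proof. by exists (fun=> 0); rewrite big1 // => m _; rewrite mul0r. Qed.

Lemma in_idealD p q : in_ideal N G p -> in_ideal N G q -> in_ideal N G (p + q).
Proof.
move=> [g ->] [g' ->]; exists (fun m => g m + g' m).
by rewrite -big_split; apply: eq_bigr => m _; rewrite mulrDl.
Qed.

Lemma in_idealMl a p : in_ideal N G p -> in_ideal N G (a * p).
Proof.
move=> [g ->]; exists (fun m => a * g m).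
by rewrite mulr_sumr; apply: eq_bigr => m _; rewrite mulrA.
Qed.

Lemma in_ideal_sum (I : Type) (s : seq I) (P : pred I) (F : I -> R) :
  (forall i, P i -> in_ideal N G (F i)) -> in_ideal N G (\sum_(i <- s | P i) F i).
Proof. by move=> IF; apply: big_ind => //; [exact: in_ideal0 | exact: in_idealD]. Qed.

Lemma in_ideal_gen m : (1 <= m <= N)%N -> in_ideal N G (G m).
Proof.
move=> m_range; exists (fun i => (i == m)%:R).
rewrite (bigD1_seq m) ?iota_uniq ?mem_index_iota ?ltnS //= eqxx mul1r.
by rewrite big1 ?addr0 // => i /negbTE->; rewrite mul0r.
Qed.

End IdealMembership.

Lemma in_ideal_rmorph {R S : comNzRingType} (f : {rmorphism R -> S})
    N (G : nat -> R) M (G' : nat -> S) x :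
  (forall m, (1 <= m <= N)%N -> in_ideal M G' (f (G m))) ->
  in_ideal N G x -> in_ideal M G' (f x).
Proof.
move=> IfG [g ->]; rewrite rmorph_sum big_seq; apply: in_ideal_sum => m.
by rewrite mem_index_iota ltnS rmorphM => /IfG; apply: in_idealMl.
Qed.

Section TriangularSystem.
Variable d : nat -> nat.

Definition rvars N m : seq (mpoly N) := rev [seq mvar N j | j <- iota 0 m].

Definition hgen N m : mpoly N := hcomp (d m) (rvars N m).

Fixpoint reduced N : mpoly N -> Prop :=
  match N return mpoly N -> Prop with
  | 0 => fun=> True
  | N'.+1 => fun f : {poly mpoly N'} =>
      (size f <= d N'.+1)%N /\ forall k, reduced N' f`_k
  end.

Fixpoint nf N : mpoly N -> mpoly N :=
  match N return mpoly N -> mpoly N with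
  | 0 => id
  | N'.+1 => fun f : {poly mpoly N'} =>
      \poly_(k < d N'.+1) nf N' (rmodp f (hgen N'.+1 N'.+1))`_k
  end.

Lemma rvarsC N m : (m <= N)%N -> map polyC (rvars N m) = rvars N.+1 m.
Proof.
move=> lemN; rewrite /rvars map_rev -map_comp; congr rev; apply/eq_in_map => j.
by rewrite mem_iota add0n => /andP[_ ltjm]; rewrite mvarS // (leq_trans ltjm).
Qed.

Lemma hgenC N m : (m <= N)%N -> (hgen N m)%:P = hgen N.+1 m.
Proof. by move=> lemN; rewrite /hgen (rmorph_hcomp polyC) rvarsC. Qed.

Lemma hgenSn N : hgen N.+1 N.+1 =
  'X^(d N.+1) + \poly_(k < d N.+1) hcomp (d N.+1 - k) (rvars N N).
Proof.
have rvarsSn : rvars N.+1 N.+1 = 'X :: map polyC (rvars N N).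
  rewrite rvarsC // /rvars -[in iota 0 N.+1]addn1 iotaD cats1.
  by rewrite map_rcons rev_rcons mvarSn.
rewrite /hgen rvarsSn /= big_ord_recr /= subnn hcomp0 mulr1 addrC poly_def.
by congr (_ + _); apply: eq_bigr => k _; rewrite -(rmorph_hcomp polyC) mulrC mul_polyC.
Qed.

Lemma size_hgenSn N : size (hgen N.+1 N.+1) = (d N.+1).+1.
Proof. by rewrite hgenSn size_polyDl size_polyXn // ltnS size_poly. Qed.

Lemma hgenSn_monic N : hgen N.+1 N.+1 \is monic.
Proof.
by rewrite monicE hgenSn lead_coefDl ?lead_coefXn // size_polyXn ltnS size_poly.
Qed.

Lemma in_ideal_polyC N q :
  in_ideal N (hgen N) q -> in_ideal N.+1 (hgen N.+1) q%:P.
Proof.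
apply: (in_ideal_rmorph polyC) => m /andP[lt0m lemN].
by rewrite /= hgenC //; apply: in_ideal_gen; rewrite lt0m leqW.
Qed.

Lemma in_ideal_poly N n (E : nat -> mpoly N) :
  (forall k, in_ideal N (hgen N) (E k)) ->
  in_ideal N.+1 (hgen N.+1) (\poly_(k < n) E k : {poly mpoly N}).
Proof.
move=> IE; rewrite poly_def; apply: in_ideal_sum => k _.
by rewrite -mul_polyC mulrC; apply/in_idealMl/in_ideal_polyC.
Qed.

Lemma reduced0 N : reduced N 0.
Proof. by elim: N => [|N IH] //=; split=> [|k]; rewrite ?size_poly0 ?coef0. Qed.

Lemma nf_reduced N f : reduced N (nf N f).
Proof.
elim: N f => [//|N IH] f /=; split=> [|k]; first exact: size_poly.
by rewrite coef_poly; case: ifP => _; [exact: IH | exact: reduced0].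
Qed.

Lemma in_ideal_sub_nf N f : in_ideal N (hgen N) (f - nf N f).
Proof.
elim: N f => [|N IH] f /=; first by rewrite subrr; exact: in_ideal0.
have Pmonic := hgenSn_monic N.
set P := hgen N.+1 N.+1 in Pmonic *; set r := rmodp f P.
have size_r : (size r <= d N.+1)%N.
  by rewrite -ltnS -(size_hgenSn N) ltn_rmodpN0 ?monic_neq0.
have -> : f - \poly_(k < d N.+1) nf N r`_k =
    rdivp f P * P + \poly_(k < d N.+1) (r`_k - nf N r`_k).
  rewrite {1}(rdivp_eq Pmonic f) -addrA; congr (_ + _).
  apply/polyP => k; rewrite coefB !coef_poly; case: ltnP => // le_dk.
  by rewrite nth_default ?subr0 // (leq_trans size_r).
apply: in_idealD; last exact: in_ideal_poly.
by apply/in_idealMl/in_ideal_gen; rewrite leqnn.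
Qed.

(* Reducing a representation of [r] modulo the monic generator in the last
   variable leaves [r] unchanged and turns the other generators into
   coefficientwise ones, one level down. *)
Lemma reduced_in_ideal_eq0 N r : reduced N r -> in_ideal N (hgen N) r -> r = 0.
Proof.
elim: N r => [|N IH] r /=; first by move=> _ [g ->]; rewrite big_geq.
move=> [size_r red_r] [g def_r]; apply/polyP => k; rewrite coef0.
apply: IH => //; have Pmonic := hgenSn_monic N.
set P := hgen N.+1 N.+1 in Pmonic def_r.
exists (fun m => (rmodp (g m) P)`_k).
have -> : r = rmodp r P by rewrite rmodp_small // size_hgenSn ltnS.
rewrite def_r big_nat_recr //= rmodpD // rmodp_mull // addr0.
rewrite (big_morph _ (rmodpD Pmonic) (rmod0p _)) coef_sum.
apply: eq_big_nat => m /andP[_ ltmN].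
by rewrite -hgenC // mulrC mul_polyC rmodpZ // coefZ mulrC.
Qed.

End TriangularSystem.

(* [mcoef N e p] is the coefficient of x_1^(e 0) ... x_N^(e N.-1) in [p]. *)
Fixpoint mcoef N (e : nat -> nat) : mpoly N -> int :=
  match N return mpoly N -> int with
  | 0 => id
  | N'.+1 => fun f : {poly mpoly N'} => mcoef N' e f`_(e N')
  end.

Lemma mcoef0 N e : mcoef N e 0 = 0.
Proof. by elim: N => [//|N IH] /=; rewrite coef0 IH. Qed.

Lemma mcoefD N e p q : mcoef N e (p + q) = mcoef N e p + mcoef N e q.
Proof. by elim: N p q => [//|N IH] p q /=; rewrite coefD IH. Qed.

Lemma mcoefN N e p : mcoef N e (- p) = - mcoef N e p.
Proof. by elim: N p => [//|N IH] p /=; rewrite coefN IH. Qed.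

Lemma mcoefMz N e p k : mcoef N e (p *~ k) = mcoef N e p * k.
Proof. by elim: N p => [|N IH] p /=; rewrite ?mulrzz // coefMrz IH. Qed.

Lemma mcoef_sum N e (I : Type) (s : seq I) (P : pred I) (F : I -> mpoly N) :
  mcoef N e (\sum_(i <- s | P i) F i) = \sum_(i <- s | P i) mcoef N e (F i).
Proof. exact: (big_morph _ (mcoefD N e) (mcoef0 N e)). Qed.

Definition eq_below N (e e' : nat -> nat) := all (fun j => e j == e' j) (iota 0 N).

Lemma eq_belowP N e e' :
  reflect (forall j, (j < N)%N -> e j = e' j) (eq_below N e e').
Proof.
apply: (iffP allP) => [eqe j ltjN | eqe j]; last by rewrite mem_iota => /eqe/eqP.
by apply/eqP/eqe; rewrite mem_iota.
Qed.

Lemma eq_below_refl N e : eq_below N e e.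
Proof. exact/eq_belowP. Qed.

Lemma eq_mcoef {N e e'} p : eq_below N e e' -> mcoef N e p = mcoef N e' p.
Proof.
elim: N p => [//|N IH] p /eq_belowP eqe /=.
by rewrite eqe // IH //; apply/eq_belowP => j ltjN; rewrite eqe // ltnW.
Qed.

Definition set_exp (e : nat -> nat) N k j := if j == N then k else e j.

Lemma mcoef_set_exp N e k (p : {poly mpoly N}) :
  mcoef N.+1 (set_exp e N k) p = mcoef N e p`_k.
Proof.
rewrite /= /set_exp eqxx; apply: eq_mcoef; apply/eq_belowP => j ltjN.
by rewrite (ltn_eqF ltjN).
Qed.

Lemma mcoef_neq0 N p : p != 0 -> exists e, mcoef N e p != 0.
Proof.
elim: N p => [|N IH] p p_neq0; first by exists (fun=> 0%N).
have /IH[e mcoef_e] : (p : {poly mpoly N})`_(size p).-1 != 0.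
  by rewrite -lead_coefE lead_coef_eq0.
by exists (set_exp e N (size p).-1); rewrite mcoef_set_exp.
Qed.

Lemma mcoef_inj N p q : (forall e, mcoef N e p = mcoef N e q) -> p = q.
Proof.
move=> eq_pq; apply/eqP; rewrite -subr_eq0; apply/negP => /negP /mcoef_neq0[e].
by rewrite mcoefD mcoefN eq_pq subrr eqxx.
Qed.

Definition monomial N (e : nat -> nat) : mpoly N := \prod_(j < N) mvar N j ^+ e j.

Lemma monomialS N e : monomial N.+1 e = (monomial N e)%:P * 'X^(e N).
Proof.
rewrite /monomial big_ord_recr mvarSn rmorph_prod; congr (_ * _).
by apply: eq_bigr => j _; rewrite mvarS //= -polyC_exp.
Qed.

Lemma mcoef_monomial N e' e : mcoef N e' (monomial N e) = (eq_below N e' e)%:R.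
Proof.
elim: N => [|N IH]; first by rewrite /monomial big_ord0.
rewrite /eq_below -[in iota 0 N.+1]addn1 iotaD cats1 all_rcons /=.
rewrite monomialS coefCM coefXn; case: eqP => _; last by rewrite mulr0 mcoef0.
by rewrite mulr1 IH.
Qed.

Section ReducedCoefficients.
Variable d : nat -> nat.

Definition bounded_exp N (e : nat -> nat) := forall j, (j < N)%N -> (e j < d j.+1)%N.

Lemma reducedP N p :
  reduced d N p <-> (forall e, mcoef N e p != 0 -> bounded_exp N e).
Proof.
elim: N p => [|N IH] p; first by split=> // _ e _ j.
split=> [[size_p red_p] e mcoef_e j | bnd_p] /=.
  have ltpN : (e N < d N.+1)%N.
    rewrite (leq_trans _ size_p) // ltnNge; apply: contra mcoef_e => le_pe.
    by rewrite /= nth_default // mcoef0.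
  rewrite ltnS leq_eqVlt => /orP[/eqP-> // | ltjN].
  exact: (IH _).1 (red_p (e N)) e mcoef_e j ltjN.
split=> [|k]; last first.
  apply/IH => e mcoef_e j ltjN; rewrite -mcoef_set_exp in mcoef_e.
  by have := bnd_p _ mcoef_e j (ltnW ltjN); rewrite /set_exp (ltn_eqF ltjN).
rewrite leqNgt; apply/negP => lt_d_size.
have /mcoef_neq0[e mcoef_e] : (p : {poly mpoly N})`_(size p).-1 != 0.
  by rewrite -lead_coefE lead_coef_eq0 -size_poly_gt0 (leq_trans _ lt_d_size).
rewrite -mcoef_set_exp in mcoef_e; have := bnd_p _ mcoef_e N (ltnSn N).
by rewrite /set_exp eqxx; case: (size p) lt_d_size => //= s; lia.
Qed.

End ReducedCoefficients.

Definition vrev n : {rmorphism mpoly n -> mpoly n} :=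
  mpoly_eval (fun j => mvar n (n.-1 - j)) n.

Lemma vrev_var n j : (j < n)%N -> vrev n (mvar n j) = mvar n (n.-1 - j).
Proof. exact: mpoly_eval_var. Qed.

Lemma vrevK n : involutive (vrev n).
Proof.
move=> p; have := @mpoly_rmorph_eq _ n (vrev n \o vrev n) idfun; apply=> j ltjn /=.
by rewrite !vrev_var ?subKn //; lia.
Qed.

Definition rbeta n h m := beta n h (n.+1 - m).

Lemma vrev_Jgen n h i : (1 <= i <= n)%N ->
  vrev n (Jgen n h i) = hgen (rbeta n h) n (n.+1 - i).
Proof.
move=> /andP[lt0i lein]; rewrite /Jgen /hgen rmorph_hcomp /rbeta.
have -> : (n.+1 - (n.+1 - i) = i)%N by lia.
congr hcomp; rewrite /rvars -map_comp; apply: (@eq_from_nth _ 0) => [|k].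
  by rewrite size_map size_iota size_rev size_map size_iota; lia.
rewrite size_map size_iota => ltk.
rewrite (nth_map 0%N) ?size_iota // nth_iota //.
rewrite nth_rev ?size_map ?size_iota; last by lia.
rewrite (nth_map 0%N) ?size_iota ?nth_iota; try lia.
by rewrite /= /X vrev_var; [congr mvar | ]; lia.
Qed.

Lemma in_ideal_vrev n h f :
  inJ n h f -> in_ideal n (hgen (rbeta n h) n) (vrev n f).
Proof.
apply: in_ideal_rmorph => i i_range; rewrite vrev_Jgen //.
by apply: in_ideal_gen; lia.
Qed.

Lemma inJ_vrev n h q :
  in_ideal n (hgen (rbeta n h) n) q -> inJ n h (vrev n q).
Proof.
apply: in_ideal_rmorph => m m_range.
have -> : hgen (rbeta n h) n m = vrev n (Jgen n h (n.+1 - m)).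
  by rewrite vrev_Jgen ?subKn //; lia.
by rewrite vrevK; apply: in_ideal_gen; lia.
Qed.

Definition rexp {n} (a : {ffun 'I_n -> 'I_n}) (j : nat) : nat :=
  oapp (fun i : 'I_n => val (a (rev_ord i))) 0%N (insub j).

Lemma rexp_ord n a (j : 'I_n) : rexp a j = a (rev_ord j).
Proof. by rewrite /rexp valK. Qed.

Lemma rexp_inj n (a b : {ffun 'I_n -> 'I_n}) : eq_below n (rexp a) (rexp b) -> a = b.
Proof.
move/eq_belowP => eq_ab; apply/ffunP => i; apply: val_inj.
by have := eq_ab _ (ltn_ord (rev_ord i)); rewrite !rexp_ord rev_ordK.
Qed.

Lemma vrev_mono n a : vrev n (mono n a) = monomial n (rexp a).
Proof.
rewrite /mono /monomial rmorph_prod [RHS](reindex_inj rev_ord_inj) /=.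
apply: eq_bigr => i _; have ltin := ltn_ord i.
rewrite (rmorphXn (vrev n)) /X vrev_var /=; last lia.
rewrite -[(n - i.+1)%N]/(val (rev_ord i)) rexp_ord rev_ordK.
by congr (mvar _ _ ^+ _); rewrite /=; lia.
Qed.

Definition rexpB n h e := [exists a, inB n h a && eq_below n e (rexp a)].

Lemma rbeta_rev n h i : (i < n)%N -> rbeta n h (n.-1 - i).+1 = beta n h i.+1.
Proof. by move=> ltin; rewrite /rbeta; congr beta; lia. Qed.

Lemma inB_bounded n h a : inB n h a -> bounded_exp (rbeta n h) n (rexp a).
Proof.
move=> /forallP Ba j ltjn; rewrite -[j]/(val (Ordinal ltjn)) rexp_ord.
have := Ba (rev_ord (Ordinal ltjn)); rewrite /rbeta /=.
by congr (_ < beta _ _ _)%N; lia.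
Qed.

Lemma bounded_rexp n h e : bounded_exp (rbeta n h) n e ->
  exists2 a, inB n h a & eq_below n e (rexp a).
Proof.
move=> bnd_e.
pose a : {ffun 'I_n -> 'I_n} := [ffun i : 'I_n => insubd i (e (n.-1 - i)%N)].
have val_a (i : 'I_n) : (a i : nat) = e (n.-1 - i)%N.
  have ltin := ltn_ord i.
  by rewrite ffunE val_insubd (leq_trans (bnd_e _ _)) ?/rbeta ?/beta //; lia.
exists a.
  apply/forallP => i /=; rewrite val_a -rbeta_rev //; apply: bnd_e.
  by have := ltn_ord i; lia.
apply/eq_belowP => j ltjn; rewrite -[j]/(val (Ordinal ltjn)) rexp_ord /= val_a.
by congr e; rewrite /=; lia.
Qed.

Lemma mcoef_vrev_combB n h c e : mcoef n e (vrev n (combB n h c)) =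
  \sum_(a | inB n h a) c a * (eq_below n e (rexp a))%:R.
Proof.
rewrite /combB rmorph_sum mcoef_sum; apply: eq_bigr => a _.
by rewrite (rmorphM (vrev n)) rmorph_int vrev_mono mulrzl mcoefMz mcoef_monomial mulrC.
Qed.

Lemma mcoef_vrev_combB_rexp {n h a} c :
  inB n h a -> mcoef n (rexp a) (vrev n (combB n h c)) = c a.
Proof.
move=> Ba; rewrite mcoef_vrev_combB (bigD1 a) //= eq_below_refl mulr1 big1 ?addr0 //.
move=> b /andP[_ neq_ba]; have [/rexp_inj eq_ab | _] := boolP (eq_below _ _ _).
  by rewrite eq_ab eqxx in neq_ba.
by rewrite mulr0.
Qed.

Lemma mcoef_reduced_eq0 {n h e} p : reduced (rbeta n h) n p ->
  ~~ rexpB n h e -> mcoef n e p = 0.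
Proof.
move=> red_p; apply: contraNeq => /((reducedP _ _ _).1 red_p) /bounded_rexp[a Ba eq_e].
by apply/existsP; exists a; rewrite Ba eq_e.
Qed.

Lemma vrev_combB_reduced n h c : reduced (rbeta n h) n (vrev n (combB n h c)).
Proof.
apply/reducedP => e; rewrite mcoef_vrev_combB => mcoef_e.
have /existsP[a /andP[Ba /eq_belowP eq_e]] : rexpB n h e.
  apply: contraNT mcoef_e => /existsPn none; apply/eqP/big1 => a Ba.
  by move: (none a); rewrite Ba /= => /negbTE->; rewrite mulr0.
by move=> j ltjn; rewrite eq_e //; exact: inB_bounded.
Qed.

Lemma reduced_vrev_combB {n h r} :
  reduced (rbeta n h) n r -> exists c, vrev n (combB n h c) = r.
Proof.
move=> red_r; exists (fun a => mcoef n (rexp a) r); apply: mcoef_inj => e.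
have [/existsP[a /andP[Ba eq_e]] | none] := boolP (rexpB n h e).
  by rewrite (eq_mcoef _ eq_e) mcoef_vrev_combB_rexp // (eq_mcoef _ eq_e).
rewrite (mcoef_reduced_eq0 _ red_r none).
by rewrite (mcoef_reduced_eq0 _ (vrev_combB_reduced n h _) none).
Qed.

Theorem mainTheorem10 (n : nat) (h : nat -> nat) (Hh : hessenberg n h) :
  (forall f : mpoly n, exists c : {ffun 'I_n -> 'I_n} -> int,
      inJ n h (f - combB n h c)) /\
  (forall c : {ffun 'I_n -> 'I_n} -> int,
      inJ n h (combB n h c) -> forall a, inB n h a -> c a = 0).
Proof.
split=> [f | c /in_ideal_vrev J_c a Ba].
  have [c vrev_c] := reduced_vrev_combB (nf_reduced (rbeta n h) n (vrev n f)).
  exists c; rewrite -[f - _]vrevK (rmorphB (vrev n)) vrev_c.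
  exact/inJ_vrev/in_ideal_sub_nf.
rewrite -(mcoef_vrev_combB_rexp c Ba).
by rewrite (reduced_in_ideal_eq0 _ _ _ (vrev_combB_reduced n h c) J_c) mcoef0.
Qed.
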